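(* Let $A\in\mathbb{R}^{M\times M}$ be symmetric with eigenvalues $\lambda_1,\ldots,\lambda_M\in\mathbb{R}$, let $k_n,k_p,k_u>0$, and define the symmetric matrix $$Q=\begin{pmatrix}\frac{k_p}{k_n}A&0&\frac{I_M}{2k_n}\\0&\frac{k_p}{k_n}A&\frac{k_u}{2k_n}A\\\frac{I_M}{2k_n}&\frac{k_u}{2k_n}A&k_uA\end{pmatrix}.$$ Then: (1) the $3M$ eigenvalues of $Q$ are, for $i=1,\ldots,M$, $$\mu_1(\lambda_i)=\frac{k_p}{k_n}\lambda_i,\quad \mu_2(\lambda_i)=\frac{\lambda_ik_1-\sqrt{1+\lambda_i^2k_2}}{2k_n},\quad \mu_3(\lambda_i)=\frac{\lambda_ik_1+\sqrt{1+\lambda_i^2k_2}}{2k_n},$$ with $k_1=k_p+k_nk_u>0$ and $k_2=k_u^2+(k_p-k_nk_u)^2>0$; (2) if $\lambda_1\le\lambda_2\le\cdots\le\lambda_M<0$ and $k_n$ is such that $\lambda_M^2(4k_nk_pk_u-k_u^2)>1$, then $\mu_j(\lambda_i)<0$ for all $j=1,2,3$ and $i=1,\ldots,M$, and $\mu_3(\lambda_M)=\max_{j\in\{1,2,3\},\,i\in\{1,\ldots,M\}}\mu_j(\lambda_i)$. *)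

From HB Require Import structures.
From mathcomp Require Import all_boot all_order all_algebra.
Set Implicit Arguments. Unset Strict Implicit. Unset Printing Implicit Defensive.
Import Order.TTheory GRing.Theory Num.Theory.
Local Open Scope ring_scope.

Section Defs.
Variable R : rcfType.

Definition k1 (kn kp ku : R) : R := kp + kn * ku.
Definition k2 (kn kp ku : R) : R := ku ^+ 2 + (kp - kn * ku) ^+ 2.

Definition mu1 (kn kp ku l : R) : R := kp / kn * l.
Definition mu2 (kn kp ku l : R) : R :=
  (l * k1 kn kp ku - Num.sqrt (1 + l ^+ 2 * k2 kn kp ku)) / (2 * kn).
Definition mu3 (kn kp ku l : R) : R :=
  (l * k1 kn kp ku + Num.sqrt (1 + l ^+ 2 * k2 kn kp ku)) / (2 * kn).

(* mu_j for j = 1,2,3 indexed by 'I_3 (j = 0,1,2) *)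
Definition mu (kn kp ku : R) (j : 'I_3) (l : R) : R :=
  match val j with
  | 0%N => mu1 kn kp ku l
  | 1%N => mu2 kn kp ku l
  | _ => mu3 kn kp ku l
  end.

Definition Qmat (M : nat) (kn kp ku : R) (A : 'M[R]_M) : 'M[R]_(M + M + M) :=
  block_mx
    (block_mx ((kp / kn) *: A) 0 0 ((kp / kn) *: A))
    (col_mx (1 / (2 * kn))%:M ((ku / (2 * kn)) *: A))
    (row_mx (1 / (2 * kn))%:M ((ku / (2 * kn)) *: A))
    (ku *: A).

End Defs.

From HB Require Import structures.
From mathcomp Require Import all_boot all_order all_algebra.
From mathcomp Require Import ring lra.
Set Implicit Arguments. Unset Strict Implicit. Unset Printing Implicit Defensive.
Import Order.TTheory GRing.Theory Num.Theory.
Local Open Scope ring_scope.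

(* For x large, x I - Q is a 3 x 3 block matrix whose blocks are polynomials
   in A, hence commute; with P = x I - (kp/kn) A the Schur complement gives
   det (x I - Q) = det P * det (q_x(A)) for an explicit quadratic q_x.  Both
   determinants split along the eigenvalues of A, and (x - (kp/kn) l) q_x(l)
   = (x - mu1 l)(x - mu2 l)(x - mu3 l); two polynomials agreeing on a
   half-line are equal.
   For the ordering, mu1 and mu2 are below mu3 pointwise, mu3 is
   nondecreasing as soon as k2 <= k1^2, and k1^2 - k2 = 4 kn kp ku - ku^2;
   finally, for l < 0, mu3 l < 0 exactly when l^2 (k1^2 - k2) > 1, so the
   hypothesis on lam_M makes every mu_j (lam_i) <= mu3 (lam_M) negative. *)

Lemma horner_char_poly (R : comNzRingType) n (B : 'M[R]_n) x :
  (char_poly B).[x] = \det (x%:M - B).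
Proof.
rewrite /char_poly -horner_evalE -det_map_mx; congr (\det _).
apply/matrixP => i j; rewrite !mxE /horner_evalE /=.
by rewrite horner_evalE hornerD hornerN hornerMn hornerX hornerC.
Qed.

Lemma eq_poly_on_halfline (R : realFieldType) (p q : {poly R}) (K : R) :
  (forall x, K <= x -> p.[x] = q.[x]) -> p = q.
Proof.
move=> eq_pq; apply/eqP; rewrite -subr_eq0; apply/eqP.
apply: (@roots_geq_poly_eq0 _ _ (mkseq (fun i => K + i%:R) (size (p - q)))).
- apply/allP => y /mapP [i _ ->]; rewrite /root hornerD hornerN eq_pq ?subrr //.
  by rewrite lerDl ler0n.
- by apply: mkseq_uniq => i j /addrI /eqP; rewrite eqr_nat => /eqP.
- by rewrite size_mkseq.
Qed.

Lemma det_block3_commute (F : fieldType) n (P V1 V2 U1 U2 W : 'M[F]_n) :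
  P *m V1 = V1 *m P -> P *m V2 = V2 *m P -> \det P != 0 ->
  \det (block_mx (block_mx P 0 0 P) (col_mx U1 U2) (row_mx V1 V2) W)
  = \det P * \det (P *m W - V1 *m U1 - V2 *m U2).
Proof.
move=> PV1 PV2 detP_neq0.
pose L := block_mx (1%:M : 'M_(n + n)) 0 (row_mx (- V1) (- V2)) P.
have detL : \det L = \det P by rewrite det_lblock det1 mul1r.
have eliminate :
    L *m block_mx (block_mx P 0 0 P) (col_mx U1 U2) (row_mx V1 V2) W
  = block_mx (block_mx P 0 0 P) (col_mx U1 U2) 0
             (P *m W - V1 *m U1 - V2 *m U2).
  rewrite mulmx_block !mul1mx !mul0mx !addr0; congr block_mx.
    rewrite mul_row_block !mulmx0 !addr0 !add0r mul_mx_row.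
    by rewrite !mulNmx PV1 PV2 add_row_mx !addNr row_mx0.
  by rewrite mul_row_col !mulNmx addrC addrA.
have := congr1 determinant eliminate.
rewrite det_mulmx detL det_ublock det_ublock => detE.
by apply: (mulfI detP_neq0); rewrite detE mulrA.
Qed.

Lemma le_of_sqr_le (R : realDomainType) (u v : R) :
  0 <= v -> u ^+ 2 <= v ^+ 2 -> u <= v.
Proof. by move=> v_ge0 uv; nra. Qed.

Lemma lt_of_sqr_lt (R : realDomainType) (u v : R) :
  0 <= v -> u ^+ 2 < v ^+ 2 -> u < v.
Proof. by move=> v_ge0 uv; nra. Qed.

(* [l |-> sqrt (1 + l^2 K2)] is [sqrt K2]-Lipschitz, and [sqrt K2 <= K1]. *)
Lemma ler_mul_add_sqrt1_sqr (R : rcfType) (K1 K2 l l' : R) :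
  0 <= K1 -> 0 <= K2 -> K2 <= K1 ^+ 2 -> l <= l' ->
  l * K1 + Num.sqrt (1 + l ^+ 2 * K2) <= l' * K1 + Num.sqrt (1 + l' ^+ 2 * K2).
Proof.
move=> K1_ge0 K2_ge0 K2_le ll'.
have sqr_sqrt1 u : Num.sqrt (1 + u ^+ 2 * K2) ^+ 2 = 1 + u ^+ 2 * K2.
  by rewrite sqr_sqrtr // addr_ge0 // mulr_ge0 ?sqr_ge0.
have s2 := sqr_sqrt1 l; have s'2 := sqr_sqrt1 l'.
set s := Num.sqrt _ in s2 *; set s' := Num.sqrt _ in s'2 *.
have s_ge0 : 0 <= s by exact: sqrtr_ge0.
have s'_ge0 : 0 <= s' by exact: sqrtr_ge0.
clearbody s s'.
have slope : - l' * K2 <= K1 * s'.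
  apply: le_of_sqr_le; first exact: mulr_ge0.
  rewrite !exprMn s'2 sqrrN; nra.
suff : s <= (l' - l) * K1 + s' by lra.
apply: le_of_sqr_le; first by rewrite addr_ge0 // mulr_ge0 ?subr_ge0.
have -> : ((l' - l) * K1 + s') ^+ 2
    = s ^+ 2 + (l' - l) ^+ 2 * (K1 ^+ 2 - K2) + 2 * (l' - l) * (K1 * s' + l' * K2).
  by rewrite s2 sqrrD s'2; ring.
rewrite -addrA lerDl addr_ge0 // ?mulr_ge0 ?sqr_ge0 ?subr_ge0 //; nra.
Qed.

Section SplitCharPoly.

Variables (R : fieldType) (n : nat) (A : 'M[R]_n) (lam : 'I_n -> R).
Hypothesis char_poly_split : char_poly A = \prod_(i < n) ('X - (lam i)%:P).

Let prod_scale (a : R) (F : 'I_n -> R) :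
  a ^+ n * \prod_(i < n) F i = \prod_(i < n) (a * F i).
Proof. by rewrite big_split /= prodr_const card_ord. Qed.

Lemma det_sub_scalar_mx x : \det (A - x%:M) = \prod_(i < n) (lam i - x).
Proof.
rewrite -opprB -scaleN1r detZ -horner_char_poly char_poly_split horner_prod.
by rewrite prod_scale; apply: eq_bigr => i _; rewrite hornerXsubC mulN1r opprB.
Qed.

Lemma det_affine_mx al be : be != 0 ->
  \det (al%:M + be *: A) = \prod_(i < n) (al + be * lam i).
Proof.
move=> be_neq0.
have -> : al%:M + be *: A = be *: (A - (- al / be)%:M).
  apply/matrixP => i j; rewrite !mxE.
  by case: (i == j); rewrite ?mulr1n ?mulr0n; field.
rewrite detZ det_sub_scalar_mx prod_scale.
by apply: eq_bigr => i _; field.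
Qed.

Lemma det_quadratic_mx_roots al be ga y1 y2 :
  be = - (ga * (y1 + y2)) -> al = ga * (y1 * y2) ->
  \det (al%:M + be *: A + ga *: (A *m A))
  = \prod_(i < n) (al + be * lam i + ga * lam i ^+ 2).
Proof.
move=> -> ->.
have -> : (ga * (y1 * y2))%:M + - (ga * (y1 + y2)) *: A + ga *: (A *m A)
    = ga *: ((A - y1%:M) *m (A - y2%:M)).
  rewrite mulmxBl !mulmxBr mul_mx_scalar mul_scalar_mx -scalar_mxM.
  apply/matrixP => i j; rewrite !mxE.
  by case: (i == j); rewrite ?mulr1n ?mulr0n; ring.
rewrite detZ det_mulmx !det_sub_scalar_mx -big_split /= prod_scale.
by apply: eq_bigr => i _; ring.
Qed.

End SplitCharPoly.

Lemma det_quadratic_mx (R : rcfType) n (A : 'M[R]_n) (lam : 'I_n -> R)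
    al be ga :
  char_poly A = \prod_(i < n) ('X - (lam i)%:P) ->
  0 <= be ^+ 2 - 4 * al * ga -> (ga = 0 -> be != 0) ->
  \det (al%:M + be *: A + ga *: (A *m A))
  = \prod_(i < n) (al + be * lam i + ga * lam i ^+ 2).
Proof.
move=> splitA discr_ge0 affine.
have [ga0|ga_neq0] := eqVneq ga 0.
  rewrite ga0 scale0r addr0 (det_affine_mx splitA) ?affine //.
  by apply: eq_bigr => i _; rewrite mul0r addr0.
pose d := Num.sqrt (be ^+ 2 - 4 * al * ga).
have d2 : d ^+ 2 = be ^+ 2 - 4 * al * ga by rewrite sqr_sqrtr.
apply: (det_quadratic_mx_roots splitA (y1 := (- be + d) / (2 * ga))
                                      (y2 := (- be - d) / (2 * ga))).
  by field.
rewrite (_ : ga * ((- be + d) / (2 * ga) * ((- be - d) / (2 * ga)))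
           = (be ^+ 2 - d ^+ 2) / (4 * ga)); last by field.
by rewrite d2; field.
Qed.

Section Eigenvalues.

Variables (R : rcfType) (kn kp ku : R).
Hypotheses (kn_gt0 : 0 < kn) (kp_gt0 : 0 < kp) (ku_gt0 : 0 < ku).

Local Notation a := (kp / kn).
Local Notation b := (ku / (2 * kn)).
Local Notation c := (1 / (2 * kn)).

Let kn_neq0 : kn != 0. Proof. by rewrite gt_eqF. Qed.

Let c_gt0 : 0 < c. Proof. by rewrite divr_gt0 // mulr_gt0. Qed.

Lemma k1_gt0 : 0 < k1 kn kp ku.
Proof. by rewrite /k1 addr_gt0 // mulr_gt0. Qed.

Lemma k2_gt0 : 0 < k2 kn kp ku.
Proof. by rewrite /k2 ltr_pwDl ?sqr_ge0 // exprn_gt0. Qed.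

Lemma k1_sqr_sub_k2 : k1 kn kp ku ^+ 2 - k2 kn kp ku = 4 * kn * kp * ku - ku ^+ 2.
Proof. by rewrite /k1 /k2; ring. Qed.

Let sqrt_sqr l :
  Num.sqrt (1 + l ^+ 2 * k2 kn kp ku) ^+ 2 = 1 + l ^+ 2 * k2 kn kp ku.
Proof. by rewrite sqr_sqrtr // addr_ge0 // mulr_ge0 ?sqr_ge0 ?ltW ?k2_gt0. Qed.

Let ler_div2kn u v : (u / (2 * kn) <= v / (2 * kn)) = (u <= v).
Proof. by rewrite ler_pM2r // invr_gt0 mulr_gt0. Qed.

Lemma horner_mu_factors l x :
  (('X - (mu1 kn kp ku l)%:P) * ('X - (mu2 kn kp ku l)%:P)
     * ('X - (mu3 kn kp ku l)%:P)).[x]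
  = (x - a * l) * (x ^+ 2 - c ^+ 2 - x * (a + ku) * l + (a * ku - b ^+ 2) * l ^+ 2).
Proof.
rewrite !hornerM !hornerXsubC /mu1 /mu2 /mu3 -mulrA.
have := sqrt_sqr l; move: (Num.sqrt _) => s s2.
have -> : (x - (l * k1 kn kp ku - s) / (2 * kn)) * (x - (l * k1 kn kp ku + s) / (2 * kn))
    = x ^+ 2 - x * l * k1 kn kp ku / kn + (l ^+ 2 * k1 kn kp ku ^+ 2 - s ^+ 2) / (4 * kn ^+ 2).
  by field.
by rewrite s2 /k1 /k2; field.
Qed.

Lemma sub_Qmat_block M (A : 'M[R]_M) x :
  x%:M - Qmat kn kp ku A =
  block_mx (block_mx (x%:M - a *: A) 0 0 (x%:M - a *: A))
    (col_mx (- c%:M) (- (b *: A))) (row_mx (- c%:M) (- (b *: A)))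
    (x%:M - ku *: A).
Proof.
rewrite /Qmat [x%:M]scalar_mx_block [x%:M : 'M_(M + M)]scalar_mx_block.
rewrite opp_block_mx add_block_mx opp_block_mx add_block_mx.
by rewrite !subr0 opp_col_mx opp_row_mx !add0r.
Qed.

Lemma Qmat_schur_complement M (A : 'M[R]_M) x :
  (x%:M - a *: A) *m (x%:M - ku *: A) - - c%:M *m - c%:M - - (b *: A) *m - (b *: A)
  = (x ^+ 2 - c ^+ 2)%:M + (- (x * (a + ku))) *: A + (a * ku - b ^+ 2) *: (A *m A).
Proof.
rewrite !mulmxN !mulNmx !opprK mulmxBl !mulmxBr !mul_mx_scalar !mul_scalar_mx.
rewrite -!scalemxAl -!scalemxAr; apply/matrixP => i j; rewrite !mxE.
by case: (i == j); rewrite ?mulr1n ?mulr0n; ring.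
Qed.

Lemma schur_discriminant_ge0 x : c <= x ->
  0 <= (- (x * (a + ku))) ^+ 2 - 4 * (x ^+ 2 - c ^+ 2) * (a * ku - b ^+ 2).
Proof.
move=> cx.
have sqr_cx : c ^+ 2 <= x ^+ 2 by rewrite lerXn2r // nnegrE ltW // (lt_le_trans c_gt0).
have -> : (- (x * (a + ku))) ^+ 2 - 4 * (x ^+ 2 - c ^+ 2) * (a * ku - b ^+ 2)
    = (x * (a - ku)) ^+ 2 + 4 * (b ^+ 2 * (x ^+ 2 - c ^+ 2)) + 4 * (c ^+ 2 * (a * ku)).
  by ring.
by rewrite !addr_ge0 ?sqr_ge0 // mulr_ge0 // mulr_ge0 ?sqr_ge0 ?subr_ge0 // ltW
  // mulr_gt0 // divr_gt0.
Qed.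

Lemma det_sub_Qmat M (A : 'M[R]_M) (lam : 'I_M -> R) x :
  char_poly A = \prod_(i < M) ('X - (lam i)%:P) ->
  c <= x -> (forall i, x != a * lam i) ->
  \det (x%:M - Qmat kn kp ku A) =
  \prod_(i < M) (x - a * lam i)
     * \prod_(i < M) (x ^+ 2 - c ^+ 2 - x * (a + ku) * lam i
                       + (a * ku - b ^+ 2) * lam i ^+ 2).
Proof.
move=> splitA cx x_neq.
have a_gt0 : 0 < a by rewrite divr_gt0.
have x_gt0 : 0 < x by apply: lt_le_trans cx.
have detP : \det (x%:M - a *: A) = \prod_(i < M) (x - a * lam i).
  rewrite -scaleNr (det_affine_mx splitA) ?oppr_eq0 ?gt_eqF //.
  by apply: eq_bigr => i _; rewrite mulNr.
have PA d : (x%:M - a *: A) *m (d *: A) = (d *: A) *m (x%:M - a *: A).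
  rewrite mulmxBl mulmxBr mul_mx_scalar mul_scalar_mx.
  by rewrite -!scalemxAl -!scalemxAr !scalerA [a * d]mulrC.
rewrite sub_Qmat_block det_block3_commute; first last.
- by rewrite detP; apply/prodf_neq0 => i _; rewrite subr_eq0.
- by rewrite mulmxN mulNmx PA.
- by rewrite mulmxN mulNmx scalar_mxC.
rewrite Qmat_schur_complement detP (det_quadratic_mx splitA) ?schur_discriminant_ge0 //.
  by congr (_ * _); apply: eq_bigr => i _; rewrite mulNr mulrA.
by move=> _; rewrite oppr_eq0 mulf_neq0 ?gt_eqF ?addr_gt0.
Qed.

Lemma char_poly_Qmat M (A : 'M[R]_M) (lam : 'I_M -> R) :
  char_poly A = \prod_(i < M) ('X - (lam i)%:P) ->
  char_poly (Qmat kn kp ku A) =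
     \prod_(i < M) (('X - (mu1 kn kp ku (lam i))%:P) *
                    ('X - (mu2 kn kp ku (lam i))%:P) *
                    ('X - (mu3 kn kp ku (lam i))%:P)).
Proof.
move=> splitA.
pose S := \sum_(i < M) `|a * lam i|.
have S_ge0 : 0 <= S by apply: sumr_ge0.
apply: (@eq_poly_on_halfline _ _ _ (c + S + 1)) => x x_large.
rewrite horner_char_poly (det_sub_Qmat splitA); first last.
- move=> i; apply/eqP => x_eq.
  have : `|a * lam i| <= S by rewrite /S (bigD1 i) //= lerDl sumr_ge0.
  have := ler_norm (a * lam i); rewrite -x_eq; move: c_gt0 S_ge0 x_large; lra.
- by apply: le_trans x_large; rewrite -addrA lerDl addr_ge0.
rewrite horner_prod -big_split /=; apply: eq_bigr => i _.
by rewrite horner_mu_factors.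
Qed.

Lemma mu_le_mu3 j l : mu kn kp ku j l <= mu3 kn kp ku l.
Proof.
have s_ge0 := sqrtr_ge0 (1 + l ^+ 2 * k2 kn kp ku).
case: j => [[|[|[|j]]] j_lt3] //; rewrite /mu /=.
- rewrite /mu1 /mu3 (_ : a * l = (2 * kp * l) / (2 * kn)); last by field.
  rewrite ler_div2kn -lerBlDl; apply: le_of_sqr_le => //.
  rewrite sqrt_sqr /k1 /k2.
  rewrite (_ : (2 * kp * l - l * (kp + kn * ku)) ^+ 2 = l ^+ 2 * (kp - kn * ku) ^+ 2);
    last by ring.
  by rewrite mulrDr; have := mulr_ge0 (sqr_ge0 l) (sqr_ge0 ku); lra.
- by rewrite /mu2 /mu3 ler_div2kn; lra.
Qed.

Hypothesis k2_le_k1sqr : k2 kn kp ku <= k1 kn kp ku ^+ 2.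

Lemma ler_mu3 l l' : l <= l' -> mu3 kn kp ku l <= mu3 kn kp ku l'.
Proof.
move=> ll'; rewrite /mu3 ler_div2kn.
by apply: ler_mul_add_sqrt1_sqr => //; apply: ltW; [exact: k1_gt0 | exact: k2_gt0].
Qed.

Lemma mu3_lt0 l : l < 0 -> 1 < l ^+ 2 * (k1 kn kp ku ^+ 2 - k2 kn kp ku) ->
  mu3 kn kp ku l < 0.
Proof.
move=> l_lt0 l_large; rewrite /mu3 pmulr_llt0 ?invr_gt0 ?mulr_gt0 //.
rewrite -ltrBrDl sub0r; apply: lt_of_sqr_lt.
  by rewrite oppr_ge0 ltW // pmulr_llt0 // k1_gt0.
by rewrite sqrt_sqr sqrrN exprMn; lra.
Qed.

End Eigenvalues.

Theorem lemma1 (R : rcfType) (M : nat) (A : 'M[R]_M) (lam : 'I_M -> R)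
    (kn kp ku : R) :
  A^T = A ->
  char_poly A = \prod_(i < M) ('X - (lam i)%:P) ->
  0 < kn -> 0 < kp -> 0 < ku ->
  (char_poly (Qmat kn kp ku A) =
     \prod_(i < M) (('X - (mu1 kn kp ku (lam i))%:P) *
                    ('X - (mu2 kn kp ku (lam i))%:P) *
                    ('X - (mu3 kn kp ku (lam i))%:P))
   /\ 0 < k1 kn kp ku /\ 0 < k2 kn kp ku)
  /\
  (forall m : 'I_M, val m = M.-1 ->
     (forall i j : 'I_M, (val i <= val j)%N -> lam i <= lam j) ->
     lam m < 0 ->
     lam m ^+ 2 * (4 * kn * kp * ku - ku ^+ 2) > 1 ->
     (forall (j : 'I_3) (i : 'I_M), mu kn kp ku j (lam i) < 0) /\
     (forall (j : 'I_3) (i : 'I_M),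
         mu kn kp ku j (lam i) <= mu3 kn kp ku (lam m))).
Proof.
move=> _ splitA kn_gt0 kp_gt0 ku_gt0.
split; first by split; [exact: char_poly_Qmat | split; [exact: k1_gt0 | exact: k2_gt0]].
move=> m m_last lam_mono lam_m_lt0 lam_m_large.
rewrite -k1_sqr_sub_k2 in lam_m_large.
have k2_le_k1sqr : k2 kn kp ku <= k1 kn kp ku ^+ 2.
  by rewrite -subr_ge0; have := sqr_ge0 (lam m); nra.
have mu_le j i : mu kn kp ku j (lam i) <= mu3 kn kp ku (lam m).
  apply: le_trans (mu_le_mu3 kp kn_gt0 ku_gt0 j (lam i)) _.
  apply: (ler_mu3 kn_gt0 kp_gt0 ku_gt0 k2_le_k1sqr); apply: lam_mono.
  by rewrite m_last -ltnS prednK // (leq_ltn_trans _ (ltn_ord i)).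
split=> // j i; apply: le_lt_trans (mu_le j i) _.
exact: mu3_lt0.
Qed.
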